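(* For every real $x$, the improper Riemann integral below (improper at $t=\pi/2$) converges and $$H_1(x):=1+\int_0^{\pi/2}\left(\frac{x\sec^2 t\, e^{-x\tan t}}{\left(1+e^{-x\tan t}\right)^2}-\frac12 e^{-x^2\tan t}x^2\sec^2 t\right)dt=\begin{cases}0,& x<0,\\ 1,& x\ge 0.\end{cases}$$ *)

From Stdlib Require Import Reals.
From Coquelicot Require Import Coquelicot.
Open Scope R_scope.

Definition sec2 (t : R) : R := / (cos t ^ 2).

Definition H1_integrand (x t : R) : R :=
  x * sec2 t * exp (- x * tan t) / (1 + exp (- x * tan t)) ^ 2
  - / 2 * exp (- x ^ 2 * tan t) * x ^ 2 * sec2 t.

Definition step (x : R) : R := if Rlt_dec x 0 then 0 else 1.

(* Substituting [u = tan t], the integrand becomes [G'(u) du] with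
   [G u = 1 / (1 + e^(-x u)) + e^(-x^2 u) / 2].  As [G 0 = 1], the integral over
   [0, b] is [G (tan b) - 1], and [tan b -> +oo] as [b -> pi/2].  At [+oo] the
   logistic term tends to [0] for [x < 0] and to [1] for [x > 0], the second term
   to [0] for [x <> 0], and [G] is constantly [1] when [x = 0]. *)
From Stdlib Require Import Reals Lra.
From Coquelicot Require Import Coquelicot.
Open Scope R_scope.

Lemma at_left_between (a b : R) : a < b -> at_left b (fun t => a < t < b).
Proof.
intro hab. assert (hba : 0 < b - a) by lra. exists (mkposreal _ hba).
intros t ht htb. change (Rabs (t - b) < b - a) in ht. apply Rabs_def2 in ht. lra.
Qed.

Lemma is_RInt_gen_at_left_derive (f F : R -> R) (a b L : R) :
  a < b ->
  (forall t, a <= t < b -> is_derive F t (f t)) ->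
  (forall t, a <= t < b -> continuous f t) ->
  filterlim F (at_left b) (locally L) ->
  is_RInt_gen f (at_point a) (at_left b) (L - F a).
Proof.
intros hab hder hcont hF P HP.
assert (hdiff : filterlim (fun t => F t - F a) (at_left b) (locally (L - F a))).
{ apply (filterlim_comp _ _ _ F (fun y => y - F a) _ _ _ hF).
  apply (continuous_minus (fun y : R => y) (fun _ => F a)).
  - exact (continuous_id L).
  - exact (continuous_const (F a) L). }
assert (hPb : at_left b (fun t => P (F t - F a))) by exact (hdiff P HP).
apply (Filter_prod (at_point a) _ _ (fun s => s = a) _ eq_refl
  (filter_and _ _ (at_left_between a b hab) hPb)).
intros s t -> [hat hP].
exists (F t - F a). split; [|exact hP].
apply (is_RInt_derive (V := R_CompleteNormedModule) F); simpl;
  rewrite Rmin_left, Rmax_right by lra; intros u hu; [apply hder | apply hcont]; lra.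
Qed.

Lemma tan_at_left_PI2 : filterlim tan (at_left (PI / 2)) (Rbar_locally p_infty).
Proof.
intros P [M HM]. unfold filtermap.
assert (hM := atan_bound M).
apply (filter_imp (fun t => atan M < t < PI / 2)); [|apply at_left_between; lra].
intros t ht. apply HM.
rewrite <- (tan_atan M). apply tan_increasing; lra.
Qed.

Lemma is_lim_scal_p_infty (c : R) (l : Rbar) :
  is_Rbar_mult p_infty c l -> is_lim (fun u => c * u) p_infty l.
Proof.
intro hl. rewrite <- (is_Rbar_mult_unique _ _ _ (is_Rbar_mult_sym _ _ _ hl)).
exact (is_lim_scal_l _ c _ _ (is_lim_id p_infty)).
Qed.

Lemma is_lim_exp_scal_neg (c : R) : c < 0 -> is_lim (fun u => exp (c * u)) p_infty 0.
Proof.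
intro hc. apply (is_lim_comp exp _ p_infty 0 m_infty is_lim_exp_m).
- apply is_lim_scal_p_infty, is_Rbar_mult_p_infty_neg. exact hc.
- exists 0. intros u _. discriminate.
Qed.

Lemma is_lim_exp_scal_pos (c : R) : 0 < c -> is_lim (fun u => exp (c * u)) p_infty p_infty.
Proof.
intro hc. apply (is_lim_comp exp _ p_infty p_infty p_infty is_lim_exp_p).
- apply is_lim_scal_p_infty, is_Rbar_mult_p_infty_pos. exact hc.
- exists 0. intros u _. discriminate.
Qed.

Lemma is_lim_inv_1_plus_exp_scal_neg (c : R) :
  c < 0 -> is_lim (fun u => / (1 + exp (c * u))) p_infty 1.
Proof.
intro hc.
assert (h1 : is_lim (fun u => 1 + exp (c * u)) p_infty (1 + 0)).
{ apply is_lim_plus'; [apply is_lim_const | exact (is_lim_exp_scal_neg c hc)]. }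
replace (Finite 1) with (Rbar_inv (1 + 0)) by (simpl; f_equal; field).
apply is_lim_inv; [exact h1 | simpl; intro h; injection h; lra].
Qed.

Lemma is_lim_inv_1_plus_exp_scal_pos (c : R) :
  0 < c -> is_lim (fun u => / (1 + exp (c * u))) p_infty 0.
Proof.
intro hc.
assert (h1 : is_lim (fun u => 1 + exp (c * u)) p_infty p_infty).
{ eapply is_lim_plus; [apply is_lim_const | exact (is_lim_exp_scal_pos c hc) | reflexivity]. }
exact (is_lim_inv _ _ _ h1 ltac:(discriminate)).
Qed.

Definition H1_primitive (x u : R) : R :=
  / (1 + exp (- x * u)) + / 2 * exp (- x ^ 2 * u).

Lemma H1_primitive_0 (x : R) : H1_primitive x 0 = 1.
Proof. unfold H1_primitive. rewrite !Rmult_0_r, exp_0. field. Qed.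

Definition H1_primitive_deriv (x u : R) : R :=
  x * exp (- x * u) / (1 + exp (- x * u)) ^ 2 - / 2 * x ^ 2 * exp (- x ^ 2 * u).

Lemma is_derive_H1_primitive (x u : R) :
  is_derive (H1_primitive x) u (H1_primitive_deriv x u).
Proof.
unfold H1_primitive, H1_primitive_deriv.
assert (h1 : 1 + exp (- x * u) <> 0) by (generalize (exp_pos (- x * u)); lra).
auto_derive; [exact h1 |].
replace (- (x * (x * 1))) with (- x ^ 2) by ring.
field. exact h1.
Qed.

Lemma sec2_tan2 (t : R) : cos t <> 0 -> sec2 t = tan t ^ 2 + 1.
Proof.
intro hc. unfold sec2. replace (/ cos t ^ 2) with (1 / cos t ^ 2) by (unfold Rdiv; ring).
rewrite <- (sin2_cos2 t) at 1. unfold Rsqr, tan. field. exact hc.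
Qed.

Lemma is_derive_H1_primitive_tan (x t : R) :
  cos t <> 0 -> is_derive (fun s => H1_primitive x (tan s)) t (H1_integrand x t).
Proof.
intro hc.
replace (H1_integrand x t) with (scal (tan t ^ 2 + 1) (H1_primitive_deriv x (tan t))).
- exact (is_derive_comp _ _ _ _ _ (is_derive_H1_primitive x (tan t)) (is_derive_tan t hc)).
- rewrite <- (sec2_tan2 t hc). unfold scal, H1_integrand, H1_primitive_deriv. simpl.
  unfold mult. simpl. unfold Rdiv. ring.
Qed.

Lemma continuous_H1_integrand (x t : R) : cos t <> 0 -> continuous (H1_integrand x) t.
Proof.
intro hc. apply (ex_derive_continuous (V := R_NormedModule)).
unfold H1_integrand, sec2, tan.
assert (h1 : 1 + exp (- x * (sin t / cos t)) <> 0).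
{ generalize (exp_pos (- x * (sin t / cos t))); lra. }
auto_derive. repeat split; auto.
Qed.

Lemma is_lim_H1_primitive (x : R) : is_lim (H1_primitive x) p_infty (step x).
Proof.
unfold step, H1_primitive. destruct (Rlt_dec x 0) as [hneg | hnneg].
- replace (Finite 0) with (Finite (0 + / 2 * 0)) by (f_equal; ring).
  apply is_lim_plus'.
  + apply is_lim_inv_1_plus_exp_scal_pos. lra.
  + exact (is_lim_scal_l _ (/ 2) _ _ (is_lim_exp_scal_neg (- x ^ 2) ltac:(nra))).
- destruct (Req_dec x 0) as [-> | hpos].
  + apply (is_lim_ext (fun _ => 1)); [| apply is_lim_const].
    intro u. replace (- 0 * u) with 0 by ring. replace (- 0 ^ 2 * u) with 0 by ring.
    rewrite exp_0. field.
  + assert (hx2 : 0 < x ^ 2) by (apply pow_lt; lra).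
    replace (Finite 1) with (Finite (1 + / 2 * 0)) by (f_equal; ring).
    apply is_lim_plus'.
    * apply is_lim_inv_1_plus_exp_scal_neg. lra.
    * exact (is_lim_scal_l _ (/ 2) _ _ (is_lim_exp_scal_neg (- x ^ 2) ltac:(lra))).
Qed.

Theorem mainTheorem6 (x : R) :
  exists I : R,
    is_RInt_gen (H1_integrand x) (at_point 0) (at_left (PI / 2)) I /\
    1 + I = step x.
Proof.
exists (step x - 1). split; [|ring].
assert (hcos : forall t, 0 <= t < PI / 2 -> cos t <> 0).
{ intros t ht. apply Rgt_not_eq, cos_gt_0; lra. }
replace (step x - 1) with (step x - H1_primitive x (tan 0))
  by (rewrite tan_0, H1_primitive_0; ring).
apply (is_RInt_gen_at_left_derive _ (fun t => H1_primitive x (tan t))).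
- generalize PI_RGT_0; lra.
- intros t ht. exact (is_derive_H1_primitive_tan x t (hcos t ht)).
- intros t ht. exact (continuous_H1_integrand x t (hcos t ht)).
- exact (filterlim_comp _ _ _ tan (H1_primitive x) _ _ _
           tan_at_left_PI2 (is_lim_H1_primitive x)).
Qed.
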